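(* Every relative equilibrium associated to an acute triangle fixed-point configuration is Lyapunov stable on $\mathbb S^1$. Explicitly: let $m_1,m_2,m_3>0$, let $(\alpha,\beta)$ with $0<\alpha<\pi$, $0<\beta<\pi$, $\pi<\alpha+\beta<2\pi$ be such that the configuration with $m_1,m_2,m_3$ on the equator at longitudes $0,\alpha,\alpha+\beta$ is a fixed point, and let $\omega\neq0$. Then the point $X_1=(\phi_1,\phi_2,p_{\phi_1},p_{\phi_2})=(\alpha,\ \beta+\nu_1\alpha,\ 0,\ 0)$ is a Lyapunov stable equilibrium of the Hamiltonian system on $\{(\phi_1,\phi_2,p_{\phi_1},p_{\phi_2})\}$ with symplectic form $dp_{\phi_1}\wedge d\phi_1+dp_{\phi_2}\wedge d\phi_2$ and Hamiltonian $$H_{\bar m\omega}=\frac12\Big(\frac{p_{\phi_1}^2}{\nu_3}+\frac{p_{\phi_2}^2}{\nu_4}\Big)-V(\phi_1,\phi_2)+\frac{\bar m\omega^2}{2}.$$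
   Context: On the unit sphere, masses on the equator at longitudes $\varphi_i$ have geodesic distances $d_{ij}\in(0,\pi)$; the force function is $V=\sum_{i<j}m_im_j\cot d_{ij}$ and a fixed point is a critical point of $V$ (on the configuration space of $(\mathbb S^2)^3$ with $d_{ij}\notin\{0,\pi\}$). The associated relative equilibrium is the motion $\theta_i(t)=\pi/2$, $\varphi_i(t)=\varphi_i(0)+\omega t$ (uniform rotation of the fixed point about the $z$-axis). Restricted to the equator the Hamiltonian is $\sum_i\frac{p_{\varphi_i}^2}{2m_i}-V$, and the angular momentum is $p_{\varphi_1}+p_{\varphi_2}+p_{\varphi_3}$, equal to $\bar m\omega$ along the relative equilibrium. Jacobi-type coordinates: $\bar m=m_1+m_2+m_3$, $\nu_1=\frac{m_1}{m_1+m_2}$, $\nu_2=\frac{m_2}{m_1+m_2}$, $\nu_3=\frac{m_1m_2}{m_1+m_2}$, $\nu_4=\frac{(m_1+m_2)m_3}{\bar m}$, $\phi_1=\varphi_2-\varphi_1$, $\phi_2=\varphi_3-\nu_1\varphi_1-\nu_2\varphi_2$, $p_{\phi_1}=\nu_3\dot\phi_1$, $p_{\phi_2}=\nu_4\dot\phi_2$; in these variables $V(\phi_1,\phi_2)=m_1m_2\cot\phi_1+m_2m_3\cot(\phi_2-\nu_1\phi_1)-m_1m_3\cot(\phi_2+\nu_2\phi_1)$. The system with Hamiltonian $H_{\bar m\omega}$ is the reduction of the equatorial problem to angular momentum $\bar m\omega$ modulo rotations; by definition, the relative equilibrium is Lyapunov stable on $\mathbb S^1$ if the corresponding rest point $X_1$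 of this reduced system is Lyapunov stable. *)

From Stdlib Require Import Reals.
From Coquelicot Require Import Coquelicot.
Open Scope R_scope.

Definition cot (x : R) : R := cos x / sin x.

(** Force function on (S^2)^3 in spherical coordinates (theta_i colatitude,
    phi_i longitude).  cos d_ij is the dot product of the unit vectors;
    since d_ij is in (0,pi), sin d_ij = sqrt (1 - cos^2 d_ij). *)
Definition cos_dist (th1 ph1 th2 ph2 : R) : R :=
  cos th1 * cos th2 + sin th1 * sin th2 * cos (ph1 - ph2).

Definition cot_dist (th1 ph1 th2 ph2 : R) : R :=
  let c := cos_dist th1 ph1 th2 ph2 in c / sqrt (1 - c ^ 2).

Definition Vsph (m1 m2 m3 th1 ph1 th2 ph2 th3 ph3 : R) : R :=
  m1 * m2 * cot_dist th1 ph1 th2 ph2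
  + m1 * m3 * cot_dist th1 ph1 th3 ph3
  + m2 * m3 * cot_dist th2 ph2 th3 ph3.

Definition is_fixed_point (m1 m2 m3 th1 ph1 th2 ph2 th3 ph3 : R) : Prop :=
  Derive (fun x => Vsph m1 m2 m3 x ph1 th2 ph2 th3 ph3) th1 = 0 /\
  Derive (fun x => Vsph m1 m2 m3 th1 x th2 ph2 th3 ph3) ph1 = 0 /\
  Derive (fun x => Vsph m1 m2 m3 th1 ph1 x ph2 th3 ph3) th2 = 0 /\
  Derive (fun x => Vsph m1 m2 m3 th1 ph1 th2 x th3 ph3) ph2 = 0 /\
  Derive (fun x => Vsph m1 m2 m3 th1 ph1 th2 ph2 x ph3) th3 = 0 /\
  Derive (fun x => Vsph m1 m2 m3 th1 ph1 th2 ph2 th3 x) ph3 = 0.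

Definition equatorial_fixed_point (m1 m2 m3 a b : R) : Prop :=
  is_fixed_point m1 m2 m3 (PI/2) 0 (PI/2) a (PI/2) (a + b).

Definition mbar (m1 m2 m3 : R) := m1 + m2 + m3.
Definition nu1 (m1 m2 : R) := m1 / (m1 + m2).
Definition nu2 (m1 m2 : R) := m2 / (m1 + m2).
Definition nu3 (m1 m2 : R) := m1 * m2 / (m1 + m2).
Definition nu4 (m1 m2 m3 : R) := (m1 + m2) * m3 / mbar m1 m2 m3.

Definition Vred (m1 m2 m3 f1 f2 : R) : R :=
  m1 * m2 * cot f1 + m2 * m3 * cot (f2 - nu1 m1 m2 * f1)
  - m1 * m3 * cot (f2 + nu2 m1 m2 * f1).

(** Domain of the reduced system: no collisions / antipodal pairs. *)
Definition in_domain (m1 m2 f1 f2 : R) : Prop :=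
  sin f1 <> 0 /\ sin (f2 - nu1 m1 m2 * f1) <> 0 /\ sin (f2 + nu2 m1 m2 * f1) <> 0.

Definition Hred (m1 m2 m3 w f1 f2 p1 p2 : R) : R :=
  / 2 * (p1 ^ 2 / nu3 m1 m2 + p2 ^ 2 / nu4 m1 m2 m3)
  - Vred m1 m2 m3 f1 f2 + mbar m1 m2 m3 * w ^ 2 / 2.

Definition is_solution (m1 m2 m3 w T : R) (f1 f2 p1 p2 : R -> R) : Prop :=
  forall t, 0 <= t <= T ->
    in_domain m1 m2 (f1 t) (f2 t) /\
    is_derive f1 t (Derive (fun x => Hred m1 m2 m3 w (f1 t) (f2 t) x (p2 t)) (p1 t)) /\
    is_derive f2 t (Derive (fun x => Hred m1 m2 m3 w (f1 t) (f2 t) (p1 t) x) (p2 t)) /\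
    is_derive p1 t (- Derive (fun x => Hred m1 m2 m3 w x (f2 t) (p1 t) (p2 t)) (f1 t)) /\
    is_derive p2 t (- Derive (fun x => Hred m1 m2 m3 w (f1 t) x (p1 t) (p2 t)) (f2 t)).

Definition dist4 (a1 a2 a3 a4 b1 b2 b3 b4 : R) : R :=
  sqrt ((a1 - b1) ^ 2 + (a2 - b2) ^ 2 + (a3 - b3) ^ 2 + (a4 - b4) ^ 2).

Definition lyapunov_stable (m1 m2 m3 w e1 e2 e3 e4 : R) : Prop :=
  forall eps, 0 < eps -> exists delta, 0 < delta /\
    forall T f1 f2 p1 p2, 0 <= T ->
      is_solution m1 m2 m3 w T f1 f2 p1 p2 ->
      dist4 (f1 0) (f2 0) (p1 0) (p2 0) e1 e2 e3 e4 < delta ->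
      forall t, 0 <= t <= T ->
        dist4 (f1 t) (f2 t) (p1 t) (p2 t) e1 e2 e3 e4 < eps.

From Stdlib Require Import Reals Ranalysis5 Lra Psatz.
From Coquelicot Require Import Coquelicot.
Open Scope R_scope.

(* Along solutions the energy [Hred] is conserved.  In the coordinates
   u = phi1 - alpha, v = phi2 - nu1 phi1 - beta (the deviations of the arcs d12
   and d23 from alpha and beta) the kinetic energy is a positive definite form
   in the momenta, and -V has at the rest point a vanishing gradient (the
   fixed-point equations say that m_i m_j / sin^2 d_ij takes a common value K)
   and a Hessian of determinant 4 K^2 whose diagonal entries are positive
   because sin (alpha + beta) < 0.  So near X1 the quantity H - H(X1) lies
   between two positive multiples of the squared distance to X1, and a
   trajectory starting close enough to X1 can never reach a given small
   sphere around it. *)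

Definition cot' (x : R) : R := - / (sin x ^ 2).
Definition cot'' (x : R) : R := 2 * cos x / (sin x ^ 3).

Lemma is_derive_cot x : sin x <> 0 -> is_derive cot x (cot' x).
Proof.
  intros Hs. unfold cot, cot'. auto_derive; auto.
  assert (E := sin2_cos2 x). unfold Rsqr in E.
  field_simplify; auto. f_equal. nra.
Qed.

Lemma is_derive_cot' x : sin x <> 0 -> is_derive cot' x (cot'' x).
Proof.
  intros Hs. unfold cot', cot''. auto_derive.
  - intro Z. apply Hs. nra.
  - field. auto.
Qed.

Lemma ex_derive_cot x : sin x <> 0 -> ex_derive (fun y => cot y) x.
Proof. intros Hs. eexists. apply is_derive_cot, Hs. Qed.

Lemma Derive_cot x : sin x <> 0 -> Derive (fun y => cot y) x = cot' x.
Proof. intros Hs. apply is_derive_unique, is_derive_cot, Hs. Qed.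

Lemma ex_derive_cot' x : sin x <> 0 -> ex_derive (fun y => cot' y) x.
Proof. intros Hs. eexists. apply is_derive_cot', Hs. Qed.

Lemma Derive_cot' x : sin x <> 0 -> Derive (fun y => cot' y) x = cot'' x.
Proof. intros Hs. apply is_derive_unique, is_derive_cot', Hs. Qed.

Lemma continuity_pt_of_ex_derive (f : R -> R) x : ex_derive f x -> continuity_pt f x.
Proof.
  intros Hf. apply continuity_pt_filterlim.
  apply (ex_derive_continuous (V := R_NormedModule)), Hf.
Qed.

Lemma continuity_pt_eps (f : R -> R) x0 : continuity_pt f x0 ->
  forall eps, 0 < eps -> exists d, 0 < d /\
    forall x, Rabs (x - x0) < d -> Rabs (f x - f x0) < eps.
Proof.
  intros Hc eps Heps. destruct (Hc eps Heps) as [d [Hd Hnear]].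
  exists d; split; auto.
  intros x Hx. destruct (Req_dec x x0) as [->|Hne].
  - rewrite Rminus_diag, Rabs_R0; auto.
  - apply (Hnear x). repeat split; auto.
Qed.

Lemma cot''_near x0 eta : sin x0 <> 0 -> 0 < eta -> exists rho, 0 < rho /\
  forall x, Rabs (x - x0) <= rho -> sin x <> 0 /\ Rabs (cot'' x - cot'' x0) <= eta.
Proof.
  intros Hs Heta.
  assert (Hcot'' : continuity_pt cot'' x0).
  { apply continuity_pt_of_ex_derive. unfold cot''. auto_derive.
    repeat apply Rmult_integral_contrapositive_currified; auto; lra. }
  destruct (continuity_pt_eps _ _ (continuity_sin x0) (Rabs (sin x0)))
    as [d1 [Hd1 Hsin]]; [apply Rabs_pos_lt, Hs|].
  destruct (continuity_pt_eps _ _ Hcot'' eta Heta) as [d2 [Hd2 Hnear]].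
  exists (Rmin d1 d2 / 2). split; [pose proof (Rmin_pos d1 d2 Hd1 Hd2); lra|].
  intros x Hx. pose proof (Rmin_l d1 d2). pose proof (Rmin_r d1 d2).
  split.
  - intro Z. specialize (Hsin x ltac:(lra)).
    rewrite Z, Rminus_0_l, Rabs_Ropp in Hsin. lra.
  - left. apply Hnear. lra.
Qed.

Lemma MVT_interval (F dF : R -> R) x y : x <= y ->
  (forall s, x <= s <= y -> is_derive F s (dF s)) ->
  exists c, x <= c <= y /\ F y - F x = dF c * (y - x).
Proof.
  intros Hxy HD.
  destruct (MVT_gen F x y dF) as [c [Hc E]];
    rewrite ?Rmin_left, ?Rmax_right in * by lra.
  - intros s Hs. apply HD. lra.
  - intros s Hs. apply continuity_pt_of_ex_derive. eexists. apply HD. lra.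
  - exists c. auto.
Qed.

Lemma nondecreasing_of_deriv_nonneg (F dF : R -> R) x y : x <= y ->
  (forall s, x <= s <= y -> is_derive F s (dF s)) ->
  (forall s, x <= s <= y -> 0 <= dF s) -> F x <= F y.
Proof.
  intros Hxy HD Hpos. destruct (MVT_interval F dF x y Hxy HD) as [c [Hc E]].
  specialize (Hpos c Hc). nra.
Qed.

Lemma constant_of_deriv_zero (F dF : R -> R) x y : x <= y ->
  (forall s, x <= s <= y -> is_derive F s (dF s)) ->
  (forall s, x <= s <= y -> dF s = 0) -> F y = F x.
Proof.
  intros Hxy HD Hzero. destruct (MVT_interval F dF x y Hxy HD) as [c [Hc E]].
  rewrite Hzero in E by exact Hc. lra.
Qed.

Lemma second_order_lower (F F' F'' : R -> R) lo :
  (forall s, 0 <= s <= 1 -> is_derive F s (F' s)) ->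
  (forall s, 0 <= s <= 1 -> is_derive F' s (F'' s)) ->
  F' 0 = 0 -> (forall s, 0 <= s <= 1 -> lo <= F'' s) ->
  lo / 2 <= F 1 - F 0.
Proof.
  intros D1 D2 F'0 Hlo.
  assert (Hslope : forall s, 0 <= s <= 1 -> lo * s <= F' s).
  { intros s Hs.
    enough (F' 0 - lo * 0 <= F' s - lo * s) by lra.
    apply (nondecreasing_of_deriv_nonneg (fun s => F' s - lo * s) (fun s => F'' s - lo));
      [lra| |].
    - intros u Hu. apply (is_derive_minus F' (fun s => lo * s)); [apply D2; lra|].
      auto_derive; auto; ring.
    - intros u Hu. specialize (Hlo u ltac:(lra)). lra. }
  enough (F 0 - lo * 0 ^ 2 / 2 <= F 1 - lo * 1 ^ 2 / 2) by lra.
  apply (nondecreasing_of_deriv_nonneg (fun s => F s - lo * s ^ 2 / 2) (fun s => F' s - lo * s));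
    [lra| |].
  - intros u Hu. apply (is_derive_minus F (fun s => lo * s ^ 2 / 2)); [apply D1; lra|].
    auto_derive; auto; field.
  - intros u Hu. specialize (Hslope u Hu). lra.
Qed.

Lemma second_order_bounds (F F' F'' : R -> R) lo hi :
  (forall s, 0 <= s <= 1 -> is_derive F s (F' s)) ->
  (forall s, 0 <= s <= 1 -> is_derive F' s (F'' s)) ->
  F' 0 = 0 -> (forall s, 0 <= s <= 1 -> lo <= F'' s <= hi) ->
  lo / 2 <= F 1 - F 0 <= hi / 2.
Proof.
  intros D1 D2 F'0 Hb. split.
  - apply (second_order_lower F F' F''); auto. intros s Hs. apply Hb, Hs.
  - enough (- hi / 2 <= - F 1 - - F 0) by lra.
    apply (second_order_lower (fun s => - F s) (fun s => - F' s) (fun s => - F'' s)).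
    + intros s Hs. apply (is_derive_opp F), D1, Hs.
    + intros s Hs. apply (is_derive_opp F'), D2, Hs.
    + rewrite F'0. ring.
    + intros s Hs. specialize (Hb s Hs). lra.
Qed.

Lemma trapped_below_level (n e : R -> R) T c C s : 0 < c ->
  (forall t, 0 <= t <= T -> continuity_pt n t) ->
  (forall t, 0 <= t <= T -> e t = e 0) ->
  (forall t, 0 <= t <= T -> n t <= s -> c * n t <= e t <= C * n t) ->
  n 0 < s -> C * n 0 < c * s ->
  forall t, 0 <= t <= T -> n t < s.
Proof.
  intros Hc Hcont Hcons Hbound Hn0 Hstart t Ht.
  apply Rnot_le_lt. intros Hexit.
  assert (Hcross : exists t0, 0 <= t0 <= t /\ n t0 = s).
  { destruct (Req_dec (n t) s) as [Eq|Ne]; [exists t; split; [lra|exact Eq]|].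
    destruct (IVT_interv (fun u => n u - s) 0 t) as [t0 [Ht0 E0]].
    - intros u Hu. apply continuity_pt_minus; [apply Hcont; lra|apply continuity_pt_const; now intros ? ?].
    - destruct (Req_dec t 0) as [->|]; lra.
    - lra.
    - lra.
    - exists t0. split; [exact Ht0|lra]. }
  destruct Hcross as [t0 [Ht0 E0]].
  destruct (Hbound 0 ltac:(lra) ltac:(lra)) as [_ He0].
  destruct (Hbound t0 ltac:(lra) ltac:(lra)) as [He1 _].
  rewrite Hcons, E0 in He1 by lra. lra.
Qed.

Lemma quad_form_lower p r s x y : 0 < p -> 0 < p * s - r * r ->
  (p * s - r * r) / (2 * (p + s)) * (x ^ 2 + y ^ 2) <= p * x ^ 2 + 2 * r * x * y + s * y ^ 2.
Proof.
  intros Hp Hdet.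
  assert (Hs : 0 < s) by nra.
  set (mu := (p * s - r * r) / (2 * (p + s))).
  assert (Hmu : mu * (2 * (p + s)) = p * s - r * r) by (unfold mu; field; lra).
  assert (mu_pos : 0 < mu) by (unfold mu; apply Rdiv_lt_0_compat; lra).
  assert (Hshift : r * r <= (p - mu) * (s - mu)) by nra.
  assert (Hsq : (p - mu) * ((p - mu) * x ^ 2 + 2 * r * x * y + (s - mu) * y ^ 2)
                = ((p - mu) * x + r * y) ^ 2 + ((p - mu) * (s - mu) - r * r) * y ^ 2) by ring.
  assert (0 <= ((p - mu) * x + r * y) ^ 2 + ((p - mu) * (s - mu) - r * r) * y ^ 2)
    by (apply Rplus_le_le_0_compat; [apply pow2_ge_0|apply Rmult_le_pos; [lra|apply pow2_ge_0]]).
  assert (mu < p) by nra.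
  nra.
Qed.

Lemma quad_form_upper p r s x y :
  p * x ^ 2 + 2 * r * x * y + s * y ^ 2 <= (Rabs p + Rabs s + 2 * Rabs r) * (x ^ 2 + y ^ 2).
Proof.
  assert (2 * r * x * y <= Rabs r * (x ^ 2 + y ^ 2)).
  { pose proof (pow2_ge_0 (x - y)). pose proof (pow2_ge_0 (x + y)).
    unfold Rabs; destruct Rcase_abs; nra. }
  assert (p * x ^ 2 <= Rabs p * x ^ 2)
    by (apply Rmult_le_compat_r; [apply pow2_ge_0|apply Rle_abs]).
  assert (s * y ^ 2 <= Rabs s * y ^ 2)
    by (apply Rmult_le_compat_r; [apply pow2_ge_0|apply Rle_abs]).
  pose proof (Rabs_pos p). pose proof (Rabs_pos r). pose proof (Rabs_pos s).
  pose proof (pow2_ge_0 x). pose proof (pow2_ge_0 y).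
  nra.
Qed.

Definition cot_arc (u : R) : R := cos u / sqrt (1 - cos u ^ 2).

Lemma cot_dist_equator p q : cot_dist (PI / 2) p (PI / 2) q = cot_arc (p - q).
Proof.
  unfold cot_dist, cos_dist, cot_arc. rewrite cos_PI2, sin_PI2. cbv zeta.
  now replace (0 * 0 + 1 * 1 * cos (p - q)) with (cos (p - q)) by ring.
Qed.

Lemma is_derive_cot_arc u : sin u <> 0 -> is_derive cot_arc u (- sin u / Rabs (sin u) ^ 3).
Proof.
  intros Hs.
  assert (Hsin2 : 1 - cos u ^ 2 = (sin u)²) by (rewrite sin2; unfold Rsqr; ring).
  assert (Hsqrt : sqrt (1 - cos u ^ 2) = Rabs (sin u))
    by (rewrite Hsin2; apply sqrt_Rsqr_abs).
  assert (Habs2 : Rabs (sin u) ^ 2 = 1 - cos u ^ 2)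
    by (rewrite Hsin2, (Rsqr_abs (sin u)); unfold Rsqr; ring).
  assert (Habs : 0 < Rabs (sin u)) by (apply Rabs_pos_lt, Hs).
  assert (Hpos : 0 < 1 - cos u ^ 2) by (rewrite Hsin2; apply Rlt_0_sqr, Hs).
  unfold cot_arc. auto_derive;
    replace (1 + - (cos u * (cos u * 1))) with (1 - cos u ^ 2) by ring; rewrite Hsqrt.
  - repeat split; lra.
  - field_simplify_eq; [|lra]. rewrite Habs2. ring.
Qed.

Lemma equatorial_fixed_point_balance m1 m2 m3 a b :
  0 < a < PI -> 0 < b < PI -> PI < a + b < 2 * PI ->
  equatorial_fixed_point m1 m2 m3 a b ->
  m1 * m2 / sin a ^ 2 = m1 * m3 / sin (a + b) ^ 2 /\
  m1 * m2 / sin a ^ 2 = m2 * m3 / sin b ^ 2.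
Proof.
  intros Ha Hb Hab [_ [Hph1 [_ [Hph2 _]]]].
  assert (sa : 0 < sin a) by (apply sin_gt_0; lra).
  assert (sb : 0 < sin b) by (apply sin_gt_0; lra).
  assert (sab : sin (a + b) < 0) by (apply sin_lt_0; lra).
  rewrite (Derive_ext _ (fun x => m1 * m2 * cot_arc (x - a) + m1 * m3 * cot_arc (x - (a + b))
     + m2 * m3 * cot_arc (a - (a + b)))) in Hph1
    by (intro; unfold Vsph; rewrite !cot_dist_equator; reflexivity).
  rewrite (Derive_ext _ (fun x => m1 * m2 * cot_arc (0 - x) + m1 * m3 * cot_arc (0 - (a + b))
     + m2 * m3 * cot_arc (x - (a + b)))) in Hph2
    by (intro; unfold Vsph; rewrite !cot_dist_equator; reflexivity).
  assert (Dc : forall y, sin y <> 0 ->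
    Derive (fun x => cot_arc x) y = - sin y / Rabs (sin y) ^ 3)
    by (intros y Hy; apply is_derive_unique, is_derive_cot_arc, Hy).
  assert (Ec : forall y, sin y <> 0 -> ex_derive (fun x => cot_arc x) y)
    by (intros y Hy; eexists; apply is_derive_cot_arc, Hy).
  assert (sna : sin (0 + - a) = - sin a) by (rewrite Rplus_0_l; apply sin_neg).
  assert (snab : sin (0 + - (a + b)) = - sin (a + b)) by (rewrite Rplus_0_l; apply sin_neg).
  assert (snb : sin (a + - (a + b)) = - sin b)
    by (replace (a + - (a + b)) with (- b) by ring; apply sin_neg).
  erewrite is_derive_unique in Hph1
    by (auto_derive; [repeat split; apply Ec; lra|reflexivity]).
  erewrite is_derive_unique in Hph2
    by (auto_derive; [repeat split; apply Ec; lra|reflexivity]).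
  rewrite !Dc in Hph1, Hph2 by lra.
  rewrite sna, snab in Hph1. rewrite sna, snb in Hph2.
  rewrite ?Rabs_Ropp, (Rabs_right (sin a)) in Hph1, Hph2 by lra.
  rewrite (Rabs_right (sin b)) in Hph2 by lra.
  rewrite (Rabs_left (sin (a + b))) in Hph1 by lra.
  replace (- - sin a / sin a ^ 3) with (/ sin a ^ 2) in Hph1, Hph2 by (field; lra).
  replace (- - sin b / sin b ^ 3) with (/ sin b ^ 2) in Hph2 by (field; lra).
  replace (- - sin (a + b) / (- sin (a + b)) ^ 3) with (- / sin (a + b) ^ 2) in Hph1
    by (field; lra).
  unfold Rdiv. split; lra.
Qed.

Section PotentialWell.

Variables A B C a b : R.
Hypotheses (HA : 0 < A) (HB : 0 < B) (HC : 0 < C).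
Hypotheses (sa : 0 < sin a) (sb : 0 < sin b) (sab : sin (a + b) < 0).
Hypotheses (balance_ac : A / sin a ^ 2 = C / sin (a + b) ^ 2)
           (balance_ab : A / sin a ^ 2 = B / sin b ^ 2).

Definition well (u v : R) : R :=
  - A * cot (a + u) - B * cot (b + v) + C * cot (a + b + (u + v)).

Definition well_ray' (u v s : R) : R :=
  - A * u * cot' (a + s * u) - B * v * cot' (b + s * v)
  + C * (u + v) * cot' (a + b + (s * u + s * v)).

Definition well_ray'' (u v s : R) : R :=
  - A * u ^ 2 * cot'' (a + s * u) - B * v ^ 2 * cot'' (b + s * v)
  + C * (u + v) ^ 2 * cot'' (a + b + (s * u + s * v)).

Definition hess_uu : R := - A * cot'' a + C * cot'' (a + b).
Definition hess_uv : R := C * cot'' (a + b).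
Definition hess_vv : R := - B * cot'' b + C * cot'' (a + b).

Definition hess_form (u v : R) : R :=
  hess_uu * u ^ 2 + 2 * hess_uv * u * v + hess_vv * v ^ 2.

Lemma is_derive_well_ray u v s :
  sin (a + s * u) <> 0 -> sin (b + s * v) <> 0 -> sin (a + b + (s * u + s * v)) <> 0 ->
  is_derive (fun s => well (s * u) (s * v)) s (well_ray' u v s) /\
  is_derive (well_ray' u v) s (well_ray'' u v s).
Proof.
  intros H1 H2 H3. unfold well, well_ray', well_ray''. split.
  - auto_derive; [repeat split; apply ex_derive_cot; auto|].
    rewrite !Derive_cot by auto. ring.
  - auto_derive; [repeat split; apply ex_derive_cot'; auto|].
    rewrite !Derive_cot' by auto. ring.
Qed.

Let K := A / sin a ^ 2.

Let K_pos : 0 < K.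
Proof. apply Rdiv_lt_0_compat; [exact HA|apply pow_lt, sa]. Qed.

Let A_eq : A = K * sin a ^ 2.
Proof. unfold K. field. lra. Qed.

Let B_eq : B = K * sin b ^ 2.
Proof. unfold K. rewrite balance_ab. field. lra. Qed.

Let C_eq : C = K * sin (a + b) ^ 2.
Proof. unfold K. rewrite balance_ac. field. lra. Qed.

Lemma well_ray'_0 u v : well_ray' u v 0 = 0.
Proof.
  unfold well_ray', cot'. rewrite !Rmult_0_l, !Rplus_0_r.
  rewrite A_eq, B_eq, C_eq. field. lra.
Qed.

Lemma well_ray''_0 u v : well_ray'' u v 0 = hess_form u v.
Proof.
  unfold well_ray'', hess_form, hess_uu, hess_uv, hess_vv.
  rewrite !Rmult_0_l, !Rplus_0_r. ring.
Qed.

Lemma well_hessian_pos_def : 0 < hess_uu /\ 0 < hess_uu * hess_vv - hess_uv * hess_uv.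
Proof.
  assert (Ha : sin a * cos (a + b) - cos a * sin (a + b) = - sin b).
  { rewrite <- sin_minus. replace (a - (a + b)) with (- b) by ring. apply sin_neg. }
  assert (Hb : sin b * cos (a + b) - cos b * sin (a + b) = - sin a).
  { rewrite <- sin_minus. replace (b - (a + b)) with (- a) by ring. apply sin_neg. }
  assert (Huu : hess_uu = 2 * K * sin b / (- (sin a * sin (a + b)))).
  { unfold hess_uu, cot''. rewrite A_eq, C_eq.
    replace (sin b) with (- (sin a * cos (a + b) - cos a * sin (a + b))) by lra.
    field. lra. }
  assert (Hvv : hess_vv = - 2 * K * sin a / (sin b * sin (a + b))).
  { unfold hess_vv, cot''. rewrite B_eq, C_eq.
    replace (sin a) with (- (sin b * cos (a + b) - cos b * sin (a + b))) by lra.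
    field. lra. }
  assert (Huv : hess_uv = 2 * K * cos (a + b) / sin (a + b)).
  { unfold hess_uv, cot''. rewrite C_eq. field. lra. }
  assert (Hdet : hess_uu * hess_vv - hess_uv * hess_uv = 4 * K ^ 2).
  { rewrite Huu, Hvv, Huv. pose proof (sin2_cos2 (a + b)) as Hpyth. unfold Rsqr in Hpyth.
    field_simplify; try lra.
    replace (cos (a + b) ^ 2) with (1 - sin (a + b) ^ 2) by nra. field. lra. }
  split.
  - rewrite Huu. apply Rdiv_lt_0_compat; nra.
  - rewrite Hdet. pose proof K_pos. nra.
Qed.

Lemma well_ray''_near eta : 0 < eta -> exists rho, 0 < rho /\
  forall u v s, u ^ 2 + v ^ 2 <= rho ^ 2 -> 0 <= s <= 1 ->
    sin (a + s * u) <> 0 /\ sin (b + s * v) <> 0 /\ sin (a + b + (s * u + s * v)) <> 0 /\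
    Rabs (well_ray'' u v s - hess_form u v) <= eta * (u ^ 2 + v ^ 2).
Proof.
  intros Heta.
  set (eta' := eta / (A + B + 2 * C)).
  assert (Heta' : 0 < eta') by (apply Rdiv_lt_0_compat; lra).
  destruct (cot''_near a eta' ltac:(lra) Heta') as [ra [Hra Na]].
  destruct (cot''_near b eta' ltac:(lra) Heta') as [rb [Hrb Nb]].
  destruct (cot''_near (a + b) eta' ltac:(lra) Heta') as [rab [Hrab Nab]].
  set (rho := Rmin (Rmin ra rb) rab).
  assert (rho_a : rho <= ra) by (unfold rho; pose proof (Rmin_l (Rmin ra rb) rab);
    pose proof (Rmin_l ra rb); lra).
  assert (rho_b : rho <= rb) by (unfold rho; pose proof (Rmin_l (Rmin ra rb) rab);
    pose proof (Rmin_r ra rb); lra).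
  assert (rho_ab : rho <= rab) by (unfold rho; pose proof (Rmin_r (Rmin ra rb) rab); lra).
  assert (rho_pos : 0 < rho) by (repeat apply Rmin_pos; assumption).
  exists (rho / 2). split; [lra|]. intros u v s Huv Hs.
  assert (Habs : forall x, x ^ 2 <= (rho / 2) ^ 2 -> Rabs (s * x) <= rho / 2).
  { intros x Hx. rewrite Rabs_mult, (Rabs_right s) by lra.
    assert (Rabs x <= rho / 2) by (unfold Rabs; destruct Rcase_abs; nra).
    pose proof (Rabs_pos x). nra. }
  pose proof (pow2_ge_0 u). pose proof (pow2_ge_0 v).
  assert (Hu := Habs u ltac:(lra)). assert (Hv := Habs v ltac:(lra)).
  destruct (Na (a + s * u)) as [Sa Da]; [replace (a + s * u - a) with (s * u) by ring; lra|].
  destruct (Nb (b + s * v)) as [Sb Db]; [replace (b + s * v - b) with (s * v) by ring; lra|].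
  destruct (Nab (a + b + (s * u + s * v))) as [Sab Dab].
  { replace (a + b + (s * u + s * v) - (a + b)) with (s * u + s * v) by ring.
    pose proof (Rabs_triang (s * u) (s * v)). lra. }
  repeat split; auto.
  assert (Hdiff : well_ray'' u v s - hess_form u v =
    A * u ^ 2 * - (cot'' (a + s * u) - cot'' a) + B * v ^ 2 * - (cot'' (b + s * v) - cot'' b)
    + C * (u + v) ^ 2 * (cot'' (a + b + (s * u + s * v)) - cot'' (a + b)))
    by (unfold well_ray'', hess_form, hess_uu, hess_uv, hess_vv; ring).
  rewrite <- Rabs_Ropp in Da, Db.
  apply Rabs_le_between in Da, Db, Dab.
  assert (Hscale : forall w d, 0 <= w -> - eta' <= d <= eta' -> - (eta' * w) <= w * d <= eta' * w)
    by (intros w d Hw Hd; split; nra).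
  assert (Ta := Hscale (A * u ^ 2) _ ltac:(nra) Da).
  assert (Tb := Hscale (B * v ^ 2) _ ltac:(nra) Db).
  assert (Tab := Hscale (C * (u + v) ^ 2) _ ltac:(pose proof (pow2_ge_0 (u + v)); nra) Dab).
  assert (Hweights : A * u ^ 2 + B * v ^ 2 + C * (u + v) ^ 2 <= (A + B + 2 * C) * (u ^ 2 + v ^ 2))
    by (pose proof (pow2_ge_0 (u - v)); nra).
  assert (Heta_eq : eta' * (A + B + 2 * C) = eta) by (unfold eta'; field; lra).
  assert (eta' * (A * u ^ 2 + B * v ^ 2 + C * (u + v) ^ 2) <= eta * (u ^ 2 + v ^ 2))
    by (rewrite <- Heta_eq, Rmult_assoc; apply Rmult_le_compat_l; lra).
  rewrite Hdiff. apply Rabs_le_between. split; lra.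
Qed.

Lemma well_quadratic_bounds : exists rho mu Lam, 0 < rho /\ 0 < mu /\ 0 < Lam /\
  forall u v, u ^ 2 + v ^ 2 <= rho ^ 2 ->
    mu * (u ^ 2 + v ^ 2) <= well u v - well 0 0 <= Lam * (u ^ 2 + v ^ 2).
Proof.
  destruct well_hessian_pos_def as [Huu Hdet].
  set (mu := (hess_uu * hess_vv - hess_uv * hess_uv) / (2 * (hess_uu + hess_vv))).
  assert (Hmu : 0 < mu) by (apply Rdiv_lt_0_compat; nra).
  set (Lam := Rabs hess_uu + Rabs hess_vv + 2 * Rabs hess_uv).
  assert (HLam : 0 <= Lam)
    by (pose proof (Rabs_pos hess_uu); pose proof (Rabs_pos hess_vv);
        pose proof (Rabs_pos hess_uv); unfold Lam; lra).
  destruct (well_ray''_near (mu / 2) ltac:(lra)) as [rho [Hrho Hnear]].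
  exists rho, (mu / 4), ((Lam + mu / 2) / 2). do 3 (split; [lra|]).
  intros u v Huv. set (N := u ^ 2 + v ^ 2).
  assert (Hlo := quad_form_lower _ _ _ u v Huu Hdet).
  assert (Hhi := quad_form_upper hess_uu hess_uv hess_vv u v).
  fold mu Lam N in Hlo, Hhi.
  assert (Hrange := second_order_bounds (fun s => well (s * u) (s * v))
    (well_ray' u v) (well_ray'' u v) (mu * N - mu / 2 * N) (Lam * N + mu / 2 * N)).
  cbv beta in Hrange. rewrite !Rmult_1_l, !Rmult_0_l in Hrange.
  enough ((mu * N - mu / 2 * N) / 2 <= well u v - well 0 0 <= (Lam * N + mu / 2 * N) / 2)
    by lra.
  apply Hrange.
  - intros s Hs. destruct (Hnear u v s Huv Hs) as [? [? [? _]]].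
    apply is_derive_well_ray; auto.
  - intros s Hs. destruct (Hnear u v s Huv Hs) as [? [? [? _]]].
    apply is_derive_well_ray; auto.
  - apply well_ray'_0.
  - intros s Hs. destruct (Hnear u v s Huv Hs) as [_ [_ [_ Hd]]].
    apply Rabs_le_between in Hd. fold N in Hd. unfold hess_form in Hd. lra.
Qed.

End PotentialWell.

Section ReducedHamiltonian.

Variables m1 m2 m3 w : R.
Hypotheses (Hm1 : 0 < m1) (Hm2 : 0 < m2) (Hm3 : 0 < m3).

Lemma nu1_bounds : 0 < nu1 m1 m2 < 1.
Proof.
  unfold nu1. split; [apply Rdiv_lt_0_compat; lra|].
  apply (Rmult_lt_reg_r (m1 + m2)); [lra|]. field_simplify; lra.
Qed.

Lemma nu2_eq : nu2 m1 m2 = 1 - nu1 m1 m2.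
Proof. unfold nu1, nu2. field. lra. Qed.

Lemma nu3_pos : 0 < nu3 m1 m2.
Proof. unfold nu3. apply Rdiv_lt_0_compat; nra. Qed.

Lemma nu4_pos : 0 < nu4 m1 m2 m3.
Proof. unfold nu4, mbar. apply Rdiv_lt_0_compat; nra. Qed.

Lemma Derive_Hred_p1 f1 f2 p1 p2 :
  Derive (fun x => Hred m1 m2 m3 w f1 f2 x p2) p1 = p1 / nu3 m1 m2.
Proof.
  pose proof nu3_pos. apply is_derive_unique. unfold Hred, Vred.
  auto_derive; [exact I|]. field. lra.
Qed.

Lemma Derive_Hred_p2 f1 f2 p1 p2 :
  Derive (fun x => Hred m1 m2 m3 w f1 f2 p1 x) p2 = p2 / nu4 m1 m2 m3.
Proof.
  pose proof nu4_pos. apply is_derive_unique. unfold Hred, Vred.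
  auto_derive; [exact I|]. field. lra.
Qed.

Lemma Derive_Hred_f1 f1 f2 p1 p2 : in_domain m1 m2 f1 f2 ->
  Derive (fun x => Hred m1 m2 m3 w x f2 p1 p2) f1 =
   - (m1 * m2 * cot' f1 - nu1 m1 m2 * (m2 * m3) * cot' (f2 - nu1 m1 m2 * f1)
      - nu2 m1 m2 * (m1 * m3) * cot' (f2 + nu2 m1 m2 * f1)).
Proof.
  intros [D1 [D2 D3]]. apply is_derive_unique. unfold Hred, Vred.
  auto_derive; [repeat split; apply ex_derive_cot; auto|].
  unfold Rminus in *. rewrite !Derive_cot by auto. ring.
Qed.

Lemma Derive_Hred_f2 f1 f2 p1 p2 : in_domain m1 m2 f1 f2 ->
  Derive (fun x => Hred m1 m2 m3 w f1 x p1 p2) f2 =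
   - (m2 * m3 * cot' (f2 - nu1 m1 m2 * f1) - m1 * m3 * cot' (f2 + nu2 m1 m2 * f1)).
Proof.
  intros [D1 [D2 D3]]. apply is_derive_unique. unfold Hred, Vred.
  auto_derive; [repeat split; apply ex_derive_cot; auto|].
  unfold Rminus in *. rewrite !Derive_cot by auto. ring.
Qed.

Lemma Hred_conserved T f1 f2 p1 p2 : is_solution m1 m2 m3 w T f1 f2 p1 p2 ->
  forall t, 0 <= t <= T ->
  Hred m1 m2 m3 w (f1 t) (f2 t) (p1 t) (p2 t) = Hred m1 m2 m3 w (f1 0) (f2 0) (p1 0) (p2 0).
Proof.
  intros Hsol t Ht.
  apply (constant_of_deriv_zero (fun t => Hred m1 m2 m3 w (f1 t) (f2 t) (p1 t) (p2 t))
    (fun _ => 0) 0 t); [lra| |reflexivity].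
  intros u Hu. destruct (Hsol u ltac:(lra)) as [Hdom [d1 [d2 [d3 d4]]]].
  rewrite Derive_Hred_p1 in d1. rewrite Derive_Hred_p2 in d2.
  rewrite Derive_Hred_f1 in d3 by exact Hdom. rewrite Derive_Hred_f2 in d4 by exact Hdom.
  destruct Hdom as [D1 [D2 D3]].
  pose proof nu3_pos. pose proof nu4_pos. pose proof nu2_eq.
  unfold Hred, Vred. auto_derive.
  - repeat split; try (eexists; eassumption); apply ex_derive_cot; auto.
  - change (fun x => f1 x) with f1. change (fun x => f2 x) with f2.
    change (fun x => p1 x) with p1. change (fun x => p2 x) with p2.
    rewrite (is_derive_unique _ _ _ d1), (is_derive_unique _ _ _ d2),
      (is_derive_unique _ _ _ d3), (is_derive_unique _ _ _ d4).
    unfold Rminus in *. rewrite !Derive_cot by auto.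
    field. lra.
Qed.

Variables a b : R.

Definition shear_sqdist (f1 f2 p1 p2 : R) : R :=
  (f1 - a) ^ 2 + (f2 - nu1 m1 m2 * f1 - b) ^ 2 + p1 ^ 2 + p2 ^ 2.

Lemma Hred_sub_rest f1 f2 p1 p2 :
  Hred m1 m2 m3 w f1 f2 p1 p2 - Hred m1 m2 m3 w a (b + nu1 m1 m2 * a) 0 0 =
  / 2 * (p1 ^ 2 / nu3 m1 m2 + p2 ^ 2 / nu4 m1 m2 m3) +
  (well (m1 * m2) (m2 * m3) (m1 * m3) a b (f1 - a) (f2 - nu1 m1 m2 * f1 - b)
   - well (m1 * m2) (m2 * m3) (m1 * m3) a b 0 0).
Proof.
  unfold Hred, Vred, well. rewrite nu2_eq.
  replace (a + (f1 - a)) with f1 by ring.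
  replace (b + (f2 - nu1 m1 m2 * f1 - b)) with (f2 - nu1 m1 m2 * f1) by ring.
  replace (a + b + (f1 - a + (f2 - nu1 m1 m2 * f1 - b))) with (f2 + (1 - nu1 m1 m2) * f1)
    by ring.
  replace (a + 0) with a by ring.
  replace (b + 0) with (b + nu1 m1 m2 * a - nu1 m1 m2 * a) by ring.
  replace (a + b + (0 + 0)) with (b + nu1 m1 m2 * a + (1 - nu1 m1 m2) * a) by ring.
  unfold Rminus, Rdiv. ring.
Qed.

Lemma dist4_shear_sqdist f1 f2 p1 p2 :
  let d := dist4 f1 f2 p1 p2 a (b + nu1 m1 m2 * a) 0 0 in
  shear_sqdist f1 f2 p1 p2 <= 3 * d ^ 2 /\ d ^ 2 <= 3 * shear_sqdist f1 f2 p1 p2.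
Proof.
  intros d. destruct nu1_bounds.
  set (x := f1 - a). set (y := f2 - (b + nu1 m1 m2 * a)).
  assert (Hd : d ^ 2 = x ^ 2 + y ^ 2 + p1 ^ 2 + p2 ^ 2).
  { unfold d, dist4. rewrite <- Rsqr_pow2, Rsqr_sqrt; [unfold x, y; ring|].
    repeat apply Rplus_le_le_0_compat; apply pow2_ge_0. }
  assert (Hn : shear_sqdist f1 f2 p1 p2 = x ^ 2 + (y - nu1 m1 m2 * x) ^ 2 + p1 ^ 2 + p2 ^ 2)
    by (unfold shear_sqdist, x, y; ring).
  rewrite Hd, Hn.
  set (k := nu1 m1 m2) in *.
  assert (Hkx : (k * x) ^ 2 <= x ^ 2).
  { replace ((k * x) ^ 2) with (k * k * x ^ 2) by ring.
    rewrite <- (Rmult_1_l (x ^ 2)) at 2.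
    apply Rmult_le_compat_r; [apply pow2_ge_0|nra]. }
  assert (E1 : (y - k * x) ^ 2 + (y + k * x) ^ 2 = 2 * y ^ 2 + 2 * (k * x) ^ 2) by ring.
  assert (E2 : (y - 2 * k * x) ^ 2 + y ^ 2 = 2 * (y - k * x) ^ 2 + 2 * (k * x) ^ 2) by ring.
  pose proof (pow2_ge_0 (y + k * x)). pose proof (pow2_ge_0 (y - 2 * k * x)).
  pose proof (pow2_ge_0 x). pose proof (pow2_ge_0 y).
  pose proof (pow2_ge_0 p1). pose proof (pow2_ge_0 p2).
  pose proof (pow2_ge_0 (y - k * x)).
  split; lra.
Qed.

Hypotheses (sa : 0 < sin a) (sb : 0 < sin b) (sab : sin (a + b) < 0).
Hypotheses (balance_ac : m1 * m2 / sin a ^ 2 = m1 * m3 / sin (a + b) ^ 2)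
           (balance_ab : m1 * m2 / sin a ^ 2 = m2 * m3 / sin b ^ 2).

Lemma Hred_quadratic_bounds : exists rho c C, 0 < rho /\ 0 < c /\
  forall f1 f2 p1 p2, shear_sqdist f1 f2 p1 p2 <= rho ^ 2 ->
    c * shear_sqdist f1 f2 p1 p2
    <= Hred m1 m2 m3 w f1 f2 p1 p2 - Hred m1 m2 m3 w a (b + nu1 m1 m2 * a) 0 0
    <= C * shear_sqdist f1 f2 p1 p2.
Proof.
  destruct (well_quadratic_bounds (m1 * m2) (m2 * m3) (m1 * m3) a b)
    as [rho [mu [Lam [Hrho [Hmu [HLam Hwell]]]]]]; try nra; auto.
  pose proof nu3_pos. pose proof nu4_pos.
  set (k3 := / (2 * nu3 m1 m2)). set (k4 := / (2 * nu4 m1 m2 m3)).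
  assert (Hk3 : 0 < k3) by (apply Rinv_0_lt_compat; lra).
  assert (Hk4 : 0 < k4) by (apply Rinv_0_lt_compat; lra).
  exists rho, (Rmin mu (Rmin k3 k4)), (Rmax Lam (Rmax k3 k4)).
  split; [exact Hrho|split; [repeat apply Rmin_pos; assumption|]].
  intros f1 f2 p1 p2 Hnear.
  rewrite Hred_sub_rest.
  assert (Hkin : / 2 * (p1 ^ 2 / nu3 m1 m2 + p2 ^ 2 / nu4 m1 m2 m3) = k3 * p1 ^ 2 + k4 * p2 ^ 2)
    by (unfold k3, k4; field; lra).
  rewrite Hkin. unfold shear_sqdist in *.
  set (u := f1 - a) in *. set (v := f2 - nu1 m1 m2 * f1 - b) in *.
  destruct (Hwell u v) as [Wlo Whi];
    [pose proof (pow2_ge_0 p1); pose proof (pow2_ge_0 p2); lra|].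
  pose proof (Rmin_l mu (Rmin k3 k4)). pose proof (Rmin_r mu (Rmin k3 k4)).
  pose proof (Rmin_l k3 k4). pose proof (Rmin_r k3 k4).
  pose proof (Rmax_l Lam (Rmax k3 k4)). pose proof (Rmax_r Lam (Rmax k3 k4)).
  pose proof (Rmax_l k3 k4). pose proof (Rmax_r k3 k4).
  pose proof (pow2_ge_0 u). pose proof (pow2_ge_0 v).
  pose proof (pow2_ge_0 p1). pose proof (pow2_ge_0 p2).
  split; nra.
Qed.

Lemma shear_sqdist_stable s : 0 < s -> exists q, 0 < q /\
  forall T f1 f2 p1 p2, is_solution m1 m2 m3 w T f1 f2 p1 p2 ->
    shear_sqdist (f1 0) (f2 0) (p1 0) (p2 0) < q ->
    forall t, 0 <= t <= T -> shear_sqdist (f1 t) (f2 t) (p1 t) (p2 t) < s.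
Proof.
  intros Hs.
  destruct Hred_quadratic_bounds as [rho [c [C [Hrho [Hc Hbounds]]]]].
  set (level := Rmin s (rho ^ 2)).
  assert (Hlevel : 0 < level) by (apply Rmin_pos; [lra|apply pow_lt, Hrho]).
  assert (level <= s) by apply Rmin_l. assert (level <= rho ^ 2) by apply Rmin_r.
  set (Cp := Rmax C 1).
  assert (C <= Cp) by apply Rmax_l. assert (1 <= Cp) by apply Rmax_r.
  exists (Rmin level (c * level / Cp)).
  split; [apply Rmin_pos; [lra|apply Rdiv_lt_0_compat; nra]|].
  intros T f1 f2 p1 p2 Hsol Hstart t Ht.
  pose proof (Rmin_l level (c * level / Cp)). pose proof (Rmin_r level (c * level / Cp)).
  set (n := fun t => shear_sqdist (f1 t) (f2 t) (p1 t) (p2 t)).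
  assert (Hn_nonneg : forall t, 0 <= n t).
  { intros u. unfold n, shear_sqdist.
    pose proof (pow2_ge_0 (f1 u - a)). pose proof (pow2_ge_0 (f2 u - nu1 m1 m2 * f1 u - b)).
    pose proof (pow2_ge_0 (p1 u)). pose proof (pow2_ge_0 (p2 u)). lra. }
  enough (n t < level) by (unfold n in *; lra).
  apply (trapped_below_level n
    (fun t => Hred m1 m2 m3 w (f1 t) (f2 t) (p1 t) (p2 t)
              - Hred m1 m2 m3 w a (b + nu1 m1 m2 * a) 0 0) T c Cp level); auto.
  - intros u Hu. destruct (Hsol u Hu) as [_ [d1 [d2 [d3 d4]]]].
    apply continuity_pt_of_ex_derive. unfold n, shear_sqdist.
    auto_derive. repeat split; eexists; eassumption.
  - intros u Hu. rewrite (Hred_conserved T f1 f2 p1 p2 Hsol u Hu). reflexivity.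
  - intros u Hu Hnu. destruct (Hbounds (f1 u) (f2 u) (p1 u) (p2 u)) as [Hlo Hhi];
      [unfold n in Hnu; lra|].
    split; [exact Hlo|].
    pose proof (Hn_nonneg u). fold (n u) in Hhi. nra.
  - unfold n. lra.
  - assert (Cp * (c * level / Cp) = c * level) by (field; lra).
    pose proof (Hn_nonneg 0). unfold n in *. nra.
Qed.

End ReducedHamiltonian.

Theorem theorem3 (m1 m2 m3 a b w : R) :
  0 < m1 -> 0 < m2 -> 0 < m3 ->
  0 < a < PI -> 0 < b < PI -> PI < a + b < 2 * PI ->
  equatorial_fixed_point m1 m2 m3 a b ->
  w <> 0 ->
  lyapunov_stable m1 m2 m3 w a (b + nu1 m1 m2 * a) 0 0.
Proof.
  (* [w] only shifts [Hred] by a constant. *)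
  intros Hm1 Hm2 Hm3 Ha Hb Hab Hfix _ eps Heps.
  destruct (equatorial_fixed_point_balance m1 m2 m3 a b Ha Hb Hab Hfix) as [Eac Eab].
  assert (sa : 0 < sin a) by (apply sin_gt_0; lra).
  assert (sb : 0 < sin b) by (apply sin_gt_0; lra).
  assert (sab : sin (a + b) < 0) by (apply sin_lt_0; lra).
  destruct (shear_sqdist_stable m1 m2 m3 w Hm1 Hm2 Hm3 a b sa sb sab Eac Eab (eps ^ 2 / 3))
    as [q [Hq Hstable]]; [pose proof (pow_lt eps 2 Heps); lra|].
  exists (sqrt (q / 3)). split; [apply sqrt_lt_R0; lra|].
  intros T f1 f2 p1 p2 _ Hsol Hd0 t Ht.
  destruct (dist4_shear_sqdist m1 m2 Hm1 Hm2 a b (f1 0) (f2 0) (p1 0) (p2 0)) as [Hn0 _].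
  destruct (dist4_shear_sqdist m1 m2 Hm1 Hm2 a b (f1 t) (f2 t) (p1 t) (p2 t)) as [_ Hdt].
  cbv zeta in Hn0, Hdt.
  set (d0 := dist4 (f1 0) (f2 0) (p1 0) (p2 0) a (b + nu1 m1 m2 * a) 0 0) in *.
  set (dt := dist4 (f1 t) (f2 t) (p1 t) (p2 t) a (b + nu1 m1 m2 * a) 0 0) in *.
  assert (0 <= d0) by apply sqrt_pos. assert (0 <= dt) by apply sqrt_pos.
  assert (Hq3 : sqrt (q / 3) ^ 2 = q / 3) by (rewrite <- Rsqr_pow2; apply Rsqr_sqrt; lra).
  assert (d0 ^ 2 < q / 3) by (rewrite <- Hq3; nra).
  specialize (Hstable T f1 f2 p1 p2 Hsol ltac:(lra) t Ht).
  nra.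
Qed.
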